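(* Let $A=kQ/I$ be a toupie algebra over a field $k$ of characteristic zero. The set $U=C_1\cup C_2\cup C_3\cup C_4$ is a basis of $\ker D_1$, where $C_1=\{\alpha^i_j\|\alpha^i_j: \alpha^{(i)}\text{ a branch containing monomial relations, } \alpha^i_j \text{ an arrow of it}\}$; $C_2=\{\alpha^{(u)}\|c: \alpha^{(u)}\in Z,\ c\in{}_0\mathcal{B}_\omega\}$; $C_3=\{\alpha^i_j\|\alpha^i_j-\alpha^i_0\|\alpha^i_0: j\ne0,\ \alpha^{(i)}\text{ of length }>1\text{ containing no monomial relation}\}$; $C_4=\{\sum_{\alpha^{(i)}\in Q_\rho^k}\alpha^i_0\|\alpha^i_0: k=1,\dots,r\}$.
   Context: A finite quiver $Q$ is a toupie quiver if it has a unique source $0$, a unique sink $\omega$, and every other vertex is the source of exactly one arrow and the target of exactly one arrow. Paths are composed left to right. A branch is a path from $0$ to $\omega$; the arrows of a branch $\alpha^{(i)}$ are $\alpha^i_0,\alpha^i_1,\dots$ in order, $\alpha^i_0$ starting at $0$. A toupie algebra is $A=kQ/I$ with $Q$ toupie and $I$ an admissible ideal generated by monomial relations (paths inside one branch) and non-monomial relations (linear combinations of branches). $Z$ is the set of arrows from $0$ to $\omega$. The non-monomial relations have coefficient matrix in reduced row echelon form, $\rho_i=\alpha^{(k_i)}+\sum_{j>k_i}b_{ij}\alpha^{(j)}$; $R$ is a minimal generating set of $I$ formed by these $\rho_i$ and monomial relations. $E=kQ_0$, $e_x$ trivial path at $x$, ${}_0\mathcal{B}_\omega$ the set of classes of branches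 containing no monomial relation and different from all $\alpha^{(k_i)}$ (a basis of $e_0Ae_\omega$). $Q_\rho$ is the graph whose vertices are branches of length $\ge2$ containing no monomial relation, with an edge between two of them if some $\rho_i$ involves both; $Q_\rho^1,\dots,Q_\rho^r$ are its connected components. For an arrow $\gamma$ and $h\in e_{s(\gamma)}Ae_{t(\gamma)}$, $\gamma\|h$ is the $E$-bimodule map $kQ_1\to A$ sending $\gamma$ to $h$ and other arrows to $0$. $D_1:\mathrm{Hom}_{E^e}(kQ_1,A)\to\mathrm{Hom}_{E^e}(kR,A)$ is $D_1(f)(r)=\sum r^{(1)}f(r^{(2)})r^{(3)}$, the sum over all factorizations $r^{(1)}r^{(2)}r^{(3)}$ of the paths occurring in $r$ with $r^{(2)}$ an arrow, extended linearly. *)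

From mathcomp Require Import all_boot all_order all_algebra.
Set Implicit Arguments.
Unset Strict Implicit.
Unset Printing Implicit Defensive.
Import GRing.Theory.

(* The toupie quiver.  A (connected) toupie quiver is a family of n >= 1     *)
(* branches from the source 0 to the sink w; branch i has len i >= 1 arrows  *)
(* alpha^i_0, ..., alpha^i_(len i - 1).  Vertex number j (0 <= j <= len i)   *)
(* of branch i is 0 if j = 0, w if j = len i, and an interior vertex         *)
(* (private to branch i) otherwise.                                           *)
Section Quiver.
Variables (n : nat) (len : 'I_n -> nat).

Definition arrT (i : 'I_n) := 'I_(len i).
Definition Arrow := {i : 'I_n & arrT i}.

(* (i,(a,b)) with a < b <= len i : the path alpha^i_a ... alpha^i_(b-1) of
   branch i.  These are exactly the nontrivial paths of Q; entries with
   a >= b are junk and never used (see [valid]). *)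
Definition segT (i : 'I_n) := ('I_(len i).+1 * 'I_(len i).+1)%type.
Definition Seg := {i : 'I_n & segT i}.

Definition seg_a (s : Seg) : nat := val (tagged s).1.
Definition seg_b (s : Seg) : nat := val (tagged s).2.
Definition valid (s : Seg) : bool := seg_a s < seg_b s.
Definition slen (s : Seg) : nat := (seg_b s - seg_a s)%N.

Definition mkseg (i : 'I_n) (a b : nat) : Seg :=
  @Tagged 'I_n i segT (inord a, inord b).

Inductive vertex := Vsource | Vsink | Vint of 'I_n & nat.

Definition vert (i : 'I_n) (j : nat) : vertex :=
  if j == 0%N then Vsource else if j == len i then Vsink else Vint i j.

Definition src (s : Seg) : vertex := vert (tag s) (seg_a s).
Definition tgt (s : Seg) : vertex := vert (tag s) (seg_b s).

Definition branch (i : 'I_n) : Seg := mkseg i 0 (len i).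
Definition arrowseg (g : Arrow) : Seg :=
  mkseg (tag g) (val (tagged g)) (val (tagged g)).+1.

Definition segmul (p q : Seg) : option Seg :=
  if [&& tag p == tag q, seg_b p == seg_a q, valid p & valid q]
  then Some (mkseg (tag p) (seg_a p) (seg_b q)) else None.

Definition inZ (g : Arrow) : bool := len (tag g) == 1%N.

End Quiver.

(* The path algebra.  Since every cochain value and every relation lives in  *)
(* some e_x kQ e_y with x <> y, we only need the span of the nontrivial      *)
(* paths (the arrow ideal R_Q of kQ), with kQ-multiplication; multiplying by *)
(* a trivial path e_x is either the identity or zero, and is encoded by the  *)
(* option type below (None = multiplication by 1).                           *)
Section PathAlgebra.
Local Open Scope ring_scope.
Variables (k : fieldType) (n : nat) (len : 'I_n -> nat).

Definition kQ := {ffun Seg len -> k^o}.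

Definition pv (s : Seg len) : kQ := [ffun t => (t == s)%:R].

Definition pmul (x y : kQ) : kQ :=
  \sum_(p : Seg len) \sum_(q : Seg len)
     (x p * y q) *: oapp pv 0 (segmul p q).

Definition lmulo (u : option (Seg len)) (h : kQ) : kQ :=
  if u is Some s then pmul (pv s) h else h.
Definition rmulo (h : kQ) (v : option (Seg len)) : kQ :=
  if v is Some s then pmul h (pv s) else h.

Variables (mono : {set Seg len}) (p : nat) (B : 'M[k]_(p, n)).

Definition rho (l : 'I_p) : kQ := \sum_(j : 'I_n) B l j *: pv (branch len j).

Definition RelIdx := (Seg len + 'I_p)%type.
Definition inR (r : RelIdx) : bool :=
  match r with inl m => m \in mono | inr _ => true end.
Definition relvec (r : RelIdx) : kQ :=
  match r with inl m => pv m | inr l => rho l end.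

Definition GenIdx := (option (Seg len) * RelIdx * option (Seg len))%type.
Definition gen (g : GenIdx) : kQ := lmulo g.1.1 (rmulo (relvec g.1.2) g.2).

Definition inIdeal (P : pred RelIdx) (h : kQ) : Prop :=
  exists c : {ffun GenIdx -> k},
    h = \sum_(g : GenIdx | P g.1.2) c g *: gen g.

Definition inI (h : kQ) : Prop := inIdeal inR h.

(* I is admissible: I is contained in R_Q^2 (the other inclusion R_Q^m <= I
   is automatic since Q is finite and acyclic, so R_Q^m = 0 for m large). *)
Definition admissible : Prop :=
  forall h, inI h -> forall s, h s != 0 -> (2 <= slen s)%N.

Definition minimal_gen : Prop :=
  forall r, inR r -> ~ inIdeal (fun r' => inR r' && (r' != r)) (relvec r).

Definition is_rref (piv : 'I_p -> 'I_n) : Prop :=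
  [/\ forall l l' : 'I_p, (l < l')%N -> (piv l < piv l')%N,
      forall l, B l (piv l) = 1,
      forall l (j : 'I_n), (j < piv l)%N -> B l j = 0
    & forall l l', l' != l -> B l' (piv l) = 0].

Definition hasMono (i : 'I_n) : bool := [exists m in mono, tag m == i].

(* Cochains: Hom_{E^e}(kQ_1, A) = (+)_gamma e_{s gamma} A e_{t gamma}.      *)
(* A cochain is represented by f : Arrow -> kQ with f gamma a combination of *)
(* paths parallel to gamma; two representatives are equal in A iff their    *)
(* difference lies in I.                                                     *)
Definition is_cochain (f : Arrow len -> kQ) : Prop :=
  forall g s, f g s != 0 ->
    [/\ valid s, src s = src (arrowseg g) & tgt s = tgt (arrowseg g)].

Definition dpath (f : Arrow len -> kQ) (s : Seg len) : kQ :=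
  \sum_(j : 'I_(len (tag s)) | (seg_a s <= j < seg_b s)%N)
     lmulo (if (seg_a s < j)%N then Some (mkseg len (tag s) (seg_a s) j) else None)
       (rmulo (f (@Tagged 'I_n (tag s) (arrT len) j))
              (if (j.+1 < seg_b s)%N then Some (mkseg len (tag s) j.+1 (seg_b s))
               else None)).

Definition D1 (f : Arrow len -> kQ) (r : RelIdx) : kQ :=
  match r with
  | inl m => dpath f m
  | inr l => \sum_(j : 'I_n) B l j *: dpath f (branch len j)
  end.

Definition inKerD1 (f : Arrow len -> kQ) : Prop :=
  is_cochain f /\ forall r, inR r -> inI (D1 f r).

Variable piv : 'I_p -> 'I_n.

Definition inB0w (j : 'I_n) : bool := ~~ hasMono j && [forall l, piv l != j].

Definition qv (j : 'I_n) : bool := (1 < len j)%N && ~~ hasMono j.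
Definition qedge : rel 'I_n :=
  fun i j => [&& qv i, qv j & [exists l, (B l i != 0) && (B l j != 0)]].
Definition comps : {set {set 'I_n}} :=
  [set [set j | connect qedge i j] | i in [set i | qv i]].

Definition arrcoch (g : Arrow len) (h : kQ) : Arrow len -> kQ :=
  fun d => if d == g then h else 0.
Definition firstarr (K : pred 'I_n) : Arrow len -> kQ :=
  fun d => if (tag d \in K) && (val (tagged d) == 0%N)
           then pv (arrowseg d) else 0.

Definition C1idx := {g : Arrow len | hasMono (tag g)}.
Definition C2idx := ({g : Arrow len | inZ g} * {j : 'I_n | inB0w j})%type.
Definition C3idx := {g : Arrow len |
  [&& val (tagged g) != 0%N, (1 < len (tag g))%N & ~~ hasMono (tag g)]}.
Definition C4idx := {K : {set 'I_n} | K \in comps}.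
Definition UIdx := (C1idx + C2idx + C3idx + C4idx)%type.

Definition U (u : UIdx) : Arrow len -> kQ :=
  match u with
  | inl (inl (inl x)) => arrcoch (val x) (pv (arrowseg (val x)))
  | inl (inl (inr x)) => arrcoch (val x.1) (pv (branch len (val x.2)))
  | inl (inr x) => fun d => arrcoch (val x) (pv (arrowseg (val x))) d
                          - firstarr (pred1 (tag (val x))) d
  | inr K => firstarr (mem (val K))
  end.

End PathAlgebra.

From mathcomp Require Import all_boot all_order all_algebra.
From mathcomp Require Import zify.
Set Implicit Arguments. Unset Strict Implicit. Unset Printing Implicit Defensive.
Import GRing.Theory.
Local Open Scope ring_scope.

(* For an arrow a on a branch of length > 1 the only path parallel to a is a
   itself, since interior vertices lie on a single branch; so a cochain f sends
   a to λ_f(a) a, and sends an arrow of Z to a combination of branches.  Then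
   D_1 f is a multiple of each monomial relation, and
   D_1 f (ρ_l) = Σ_j B_lj σ_f(j) α^(j), where σ_f(j) sums λ_f along branch j
   (λ_f = arrow_coef f, σ_f = branch_sum f).
   Modulo I the branches without monomial relation satisfy exactly the
   relations spanned by the rows of B, so by the echelon form f lies in ker D_1
   iff σ_f is constant on the support of each row of B, i.e. on the components
   of Q_ρ.  Hence λ_f is free on branches with a monomial relation (C_1) and on
   non-initial arrows (C_3), σ_f is a free constant on each component (C_4),
   and the value on an arrow of Z is free modulo the ρ_l, i.e. in the span of
   the non-pivot branches (C_2).  Admissibility makes the arrows and these
   branches independent modulo I. *)

Section Branches.
Variables (n : nat) (len : 'I_n -> nat).
Hypothesis len_gt0 : forall i, (0 < len i)%N.

Lemma seg_b_le (s : Seg len) : (seg_b s <= len (tag s))%N.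
Proof. by case: s => i [x y]; rewrite /seg_b /= -ltnS. Qed.

Lemma seg_a_mkseg i a b : (a <= len i)%N -> seg_a (mkseg len i a b) = a.
Proof. by move=> h; rewrite /seg_a /mkseg /= inordK. Qed.

Lemma seg_b_mkseg i a b : (b <= len i)%N -> seg_b (mkseg len i a b) = b.
Proof. by move=> h; rewrite /seg_b /mkseg /= inordK. Qed.

Lemma mksegE (s : Seg len) : mkseg len (tag s) (seg_a s) (seg_b s) = s.
Proof. by case: s => i [x y]; rewrite /mkseg /seg_a /seg_b /= !inord_val. Qed.

Lemma seg_a_branch i : seg_a (branch len i) = 0%N.
Proof. exact: seg_a_mkseg. Qed.

Lemma seg_b_branch i : seg_b (branch len i) = len i.
Proof. exact: seg_b_mkseg. Qed.

Lemma valid_branch i : valid (branch len i).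
Proof. by rewrite /valid seg_a_branch seg_b_branch. Qed.

Lemma branch_inj : injective (branch len).
Proof. by move=> i j /(congr1 tag). Qed.

Lemma seg_a_arrowseg (a : Arrow len) : seg_a (arrowseg a) = val (tagged a).
Proof. exact/seg_a_mkseg/ltnW/ltn_ord. Qed.

Lemma seg_b_arrowseg (a : Arrow len) : seg_b (arrowseg a) = (val (tagged a)).+1.
Proof. exact/seg_b_mkseg/ltn_ord. Qed.

Lemma valid_arrowseg (a : Arrow len) : valid (arrowseg a).
Proof. by rewrite /valid seg_a_arrowseg seg_b_arrowseg. Qed.

Lemma slen_arrowseg (a : Arrow len) : slen (arrowseg a) = 1%N.
Proof. by rewrite /slen seg_a_arrowseg seg_b_arrowseg subSnn. Qed.

Lemma arrowseg_Tagged i (t : 'I_(len i)) :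
  arrowseg (Tagged (arrT len) t) = mkseg len i t t.+1.
Proof. by []. Qed.

Lemma segmul_mkseg i a b c : (a < b)%N -> (b < c)%N -> (c <= len i)%N ->
  segmul (mkseg len i a b) (mkseg len i b c) = Some (mkseg len i a c).
Proof.
move=> ab bc cl; rewrite /segmul /valid !seg_a_mkseg ?seg_b_mkseg //; try lia.
by rewrite !eqxx ab bc.
Qed.

Lemma segmulP (x y s : Seg len) : segmul x y = Some s ->
  [/\ tag s = tag x, tag y = tag x, seg_b x = seg_a y, valid x & valid y].
Proof.
by rewrite /segmul; case: ifP => // /and4P[/eqP-> /eqP-> -> ->] [<-].
Qed.

Lemma tag_neq_arrow (a b : Arrow len) : tag a != tag b -> (a == b) = false.
Proof. by apply: contraNF => /eqP->. Qed.

Lemma Z_arrow0 (a : Arrow len) : len (tag a) = 1%N -> val (tagged a) = 0%N.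
Proof. by case: a => i [t ti] /= li; move: ti; rewrite li; case: t. Qed.

Lemma vert_source i j : vert len i j = Vsource n -> j = 0%N.
Proof. by rewrite /vert; case: eqP => //; case: eqP. Qed.

Lemma vert_sink i j : vert len i j = Vsink n -> j = len i.
Proof. by rewrite /vert; case: eqP => //; case: eqP. Qed.

Lemma vert_interior i j i' j' : (0 < j' < len i')%N ->
  vert len i j = vert len i' j' -> i = i' /\ j = j'.
Proof.
move=> /andP[j'0 j'l]; rewrite {2}/vert (gtn_eqF j'0) (ltn_eqF j'l) /vert.
by case: eqP => //; case: eqP => // _ _ [-> ->].
Qed.

Lemma vert_len i : vert len i (len i) = Vsink n.
Proof. by rewrite /vert eqxx (gtn_eqF (len_gt0 i)). Qed.

Lemma parallel_arrowseg (a : Arrow len) (s : Seg len) : (1 < len (tag a))%N ->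
  valid s -> src s = src (arrowseg a) -> tgt s = tgt (arrowseg a) -> s = arrowseg a.
Proof.
case: a => i t /= li vs; rewrite /src /tgt seg_a_arrowseg seg_b_arrowseg /= => hs ht.
have tl : (t < len i)%N := ltn_ord t.
suff [ei ea eb] : [/\ tag s = i, seg_a s = t & seg_b s = t.+1].
  by rewrite -[s]mksegE ei ea eb.
have [t0|tpos] := eqVneq (val t) 0%N.
  rewrite t0 in hs ht *; have [-> ->] := vert_interior (j' := 1) li ht.
  by split=> //; exact: vert_source hs.
have tint : (0 < t < len i)%N by rewrite lt0n tpos tl.
have [ei ->] := vert_interior tint hs; split=> //.
have [t1l|lt1] := ltnP t.+1 (len i); first by have [_ ->] := vert_interior (j' := t.+1) t1l ht.
have e1 : t.+1 = len i by apply/eqP; rewrite eqn_leq tl lt1.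
by move: ht; rewrite e1 vert_len ei => /vert_sink.
Qed.

Lemma parallel_Z (a : Arrow len) (s : Seg len) : len (tag a) = 1%N ->
  src s = src (arrowseg a) -> tgt s = tgt (arrowseg a) -> s = branch len (tag s).
Proof.
move=> la; rewrite /src /tgt seg_a_arrowseg seg_b_arrowseg Z_arrow0 // => hs.
rewrite {2}/vert la /= => /vert_sink eb.
by rewrite /branch -(vert_source hs) -eb mksegE.
Qed.

End Branches.

Section PathAlgebra.
Variables (k : fieldType) (n : nat) (len : 'I_n -> nat).
Implicit Types (s t : Seg len) (h x y : kQ k len).

Lemma pvE s t : pv k s t = (t == s)%:R.
Proof. by rewrite ffunE. Qed.

Lemma pmul_pvl s h :
  pmul (pv k s) h = \sum_q h q *: oapp (@pv k n len) 0 (segmul s q).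
Proof.
rewrite /pmul (bigD1 s) //= [X in _ + X]big1 ?addr0 => [|q qs].
  by apply: eq_bigr => q _; rewrite pvE eqxx mul1r.
by apply: big1 => r _; rewrite pvE (negbTE qs) mul0r scale0r.
Qed.

Lemma pmul_pvr s h :
  pmul h (pv k s) = \sum_q h q *: oapp (@pv k n len) 0 (segmul q s).
Proof.
apply: eq_bigr => q _; rewrite (bigD1 s) //= big1 ?addr0 => [|r /negbTE rs].
  by rewrite pvE eqxx mulr1.
by rewrite pvE rs mulr0 scale0r.
Qed.

Lemma pmul_pv s t : pmul (pv k s) (pv k t) = oapp (@pv k n len) 0 (segmul s t).
Proof.
rewrite pmul_pvl (bigD1 t) //= big1 ?addr0 => [|q qt]; first by rewrite pvE eqxx scale1r.
by rewrite pvE (negbTE qt) scale0r.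
Qed.

Lemma pmulr0 h : pmul h 0 = 0.
Proof. by apply: big1 => p _; apply: big1 => q _; rewrite ffunE mulr0 scale0r. Qed.

Lemma pmulZl c x y : pmul (c *: x) y = c *: pmul x y.
Proof.
rewrite /pmul scaler_sumr; apply: eq_bigr => p _; rewrite scaler_sumr.
by apply: eq_bigr => q _; rewrite ffunE scalerA mulrA.
Qed.

Lemma pmulZr c x y : pmul x (c *: y) = c *: pmul x y.
Proof.
rewrite /pmul scaler_sumr; apply: eq_bigr => p _; rewrite scaler_sumr.
by apply: eq_bigr => q _; rewrite ffunE scalerA mulrCA.
Qed.

Lemma lmuloZ u c h : lmulo u (c *: h) = c *: lmulo u h.
Proof. by case: u => //= s; rewrite pmulZr. Qed.

Lemma rmuloZ v c h : rmulo (c *: h) v = c *: rmulo h v.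
Proof. by case: v => //= s; rewrite pmulZl. Qed.

Lemma lmulo0 u : lmulo u (0 : kQ k len) = 0.
Proof. by case: u => //= s; rewrite pmulr0. Qed.

Lemma rmulo_mkseg i a b c : (a < b)%N -> (b <= c <= len i)%N ->
  rmulo (pv k (mkseg len i a b)) (if (b < c)%N then Some (mkseg len i b c) else None)
  = pv k (mkseg len i a c).
Proof.
move=> ab /andP[bc cl]; case: ltnP => [bc'|cb] /=; last by have -> : c = b by lia.
by rewrite pmul_pv segmul_mkseg.
Qed.

Lemma lmulo_mkseg i a b c : (a <= b)%N -> (b < c <= len i)%N ->
  lmulo (if (a < b)%N then Some (mkseg len i a b) else None) (pv k (mkseg len i b c))
  = pv k (mkseg len i a c).
Proof.
move=> ab /andP[bc cl]; case: ltnP => [ab'|ba] /=; last by have -> : a = b by lia.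
by rewrite pmul_pv segmul_mkseg.
Qed.

End PathAlgebra.

Section Ideal.
Variables (k : fieldType) (n : nat) (len : 'I_n -> nat).
Variables (mono : {set Seg len}) (p : nat) (B : 'M[k]_(p, n)).
Implicit Types (s : Seg len) (h x y : kQ k len).

Lemma scale_kQE c h s : (c *: h) s = c * h s.
Proof. by rewrite ffunE. Qed.

Lemma sub_kQE x y s : (x - y) s = x s - y s.
Proof. by rewrite !ffunE. Qed.

Lemma inI0 : inI mono B 0.
Proof. by exists 0; rewrite big1 // => g _; rewrite ffunE scale0r. Qed.

Lemma inID x y : inI mono B x -> inI mono B y -> inI mono B (x + y).
Proof.
move=> [c1 ->] [c2 ->]; exists (c1 + c2); rewrite -big_split /=.
by apply: eq_bigr => g _; rewrite ffunE scalerDl.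
Qed.

Lemma inIZ c x : inI mono B x -> inI mono B (c *: x).
Proof.
move=> [c1 ->]; exists [ffun g => c * c1 g]; rewrite scaler_sumr.
by apply: eq_bigr => g _; rewrite ffunE scalerA.
Qed.

Lemma inI_sum (I : finType) (P : pred I) (F : I -> kQ k len) :
  (forall i, P i -> inI mono B (F i)) -> inI mono B (\sum_(i | P i) F i).
Proof. by move=> h; apply: big_ind => //; [exact: inI0 | exact: inID]. Qed.

Lemma inI_gen (g : GenIdx len p) : inR mono g.1.2 -> inI mono B (gen B g).
Proof.
move=> hg; exists [ffun g' => (g' == g)%:R].
rewrite (bigD1 g) //= big1 ?addr0 => [|g' /andP[_ /negbTE ne]].
  by rewrite ffunE eqxx scale1r.
by rewrite ffunE ne scale0r.
Qed.

Lemma inI_rho l : inI mono B (rho len B l).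
Proof. exact: (@inI_gen (None, inr l, None)). Qed.

Lemma inI_mono m : m \in mono -> inI mono B (pv k m).
Proof. exact: (@inI_gen (None, inl m, None)). Qed.

Lemma sum_pvE (I : finType) (P : pred I) (a : I -> k) (s_ : I -> Seg len) s :
  (\sum_(i | P i) a i *: pv k (s_ i)) s = \sum_(i | P i) a i * (s == s_ i)%:R.
Proof. by rewrite sum_ffunE; apply: eq_bigr => i _; rewrite scale_kQE pvE. Qed.

Lemma sum_branchesE (a : 'I_n -> k) s :
  (\sum_j a j *: pv k (branch len j)) s = if s == branch len (tag s) then a (tag s) else 0.
Proof.
rewrite sum_ffunE; case: eqP => [es|ns].
  rewrite (bigD1 (tag s)) //= big1 ?addr0 => [|j /negbTE nj].
    by rewrite scale_kQE pvE -es eqxx mulr1.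
  by rewrite scale_kQE pvE es (inj_eq (@branch_inj _ _)) eq_sym nj mulr0.
apply: big1 => j _; rewrite scale_kQE pvE; case: eqP => [es|_]; last by rewrite mulr0.
by case: ns; rewrite es.
Qed.

Lemma sum_branches_branch (a : 'I_n -> k) j :
  (\sum_j' a j' *: pv k (branch len j')) (branch len j) = a j.
Proof. by rewrite sum_branchesE eqxx. Qed.

Lemma rho_branch l j : rho len B l (branch len j) = B l j.
Proof. exact: sum_branches_branch. Qed.

Lemma rmulo_rho l s : rmulo (rho len B l) (Some s) = 0.
Proof.
rewrite /= pmul_pvr; apply: big1 => q _.
case e: (segmul q s) => [s'|] /=; last by rewrite scaler0.
have [_ eqs ebs _ vs] := segmulP e.
rewrite sum_branchesE; case: eqP => [eq|]; last by rewrite scale0r.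
have eb : seg_b q = len (tag q) by rewrite {1}eq seg_b_branch.
by move: (seg_b_le s) vs; rewrite /valid eqs -ebs eb => h1 /leq_trans/(_ h1); rewrite ltnn.
Qed.

Lemma lmulo_rho l s : lmulo (Some s) (rho len B l) = 0.
Proof.
rewrite /= pmul_pvl; apply: big1 => q _.
case e: (segmul s q) => [s'|] /=; last by rewrite scaler0.
have [_ _ ebs vs _] := segmulP e.
rewrite sum_branchesE; case: eqP => [eq|]; last by rewrite scale0r.
by move: vs; rewrite /valid ebs {1}eq seg_a_branch.
Qed.

Lemma gen_mono_path u m v : exists2 o : option (Seg len),
  gen B (u, inl m, v) = oapp (@pv k n len) 0 o & forall s, o = Some s -> tag s = tag m.
Proof.
have [o1 e1 t1] : exists2 o1 : option (Seg len),
    rmulo (pv k m) v = oapp (@pv k n len) 0 o1 & forall s, o1 = Some s -> tag s = tag m.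
  case: v => [s|]; last by exists (Some m) => // s [<-].
  by exists (segmul m s) => [|s' /segmulP[]]; rewrite /= ?pmul_pv.
rewrite /gen /= e1; case: u => [s|]; last by exists o1.
case: o1 e1 t1 => [s1|] e1 t1 /=; last by exists None; rewrite ?pmulr0.
exists (segmul s s1); first by rewrite pmul_pv.
by move=> s' /segmulP[-> <- _ _ _]; apply: t1.
Qed.

Lemma gen_rho_nontrivial (u v : option (Seg len)) l :
  (u, v) != (None, None) -> gen B (u, inr l, v) = 0.
Proof.
case: v => [s|] /=; first by rewrite /gen rmulo_rho lmulo0.
by case: u => [s|] // _; rewrite /gen lmulo_rho.
Qed.

(* Generators u ρ_l v with u or v nontrivial vanish, and the monomial ones
   live in branches with a monomial relation. *)
Lemma inI_branch_rowspan h : inI mono B h -> exists d : 'I_p -> k,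
  forall j, ~~ hasMono mono j -> h (branch len j) = \sum_l d l * B l j.
Proof.
move=> [c ->]; apply: (big_ind (fun h : kQ k len => exists d : 'I_p -> k,
  forall j, ~~ hasMono mono j -> h (branch len j) = \sum_l d l * B l j)).
- by exists (fun _ => 0) => j _; rewrite ffunE big1 // => l _; rewrite mul0r.
- move=> x y [d1 h1] [d2 h2]; exists (fun l => d1 l + d2 l) => j hj.
  by rewrite ffunE h1 // h2 // -big_split; apply: eq_bigr => l _; rewrite mulrDl.
move=> [[u [m|l]] v] /= hr.
  exists (fun _ => 0) => j hj; rewrite big1 ?scale_kQE => [|l _]; last by rewrite mul0r.
  have [[s|] -> ts] := gen_mono_path u m v; last by rewrite ffunE mulr0.
  rewrite /= pvE; case: eqP => [e|]; last by rewrite mulr0.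
  by case/negP: hj; apply/existsP; exists m; rewrite hr -(ts s) // -e /=.
have [/eqP[-> ->]|nuv] := boolP ((u, v) == (None, None)).
  exists (fun l' => c (None, inr l, None) * (l' == l)%:R) => j hj.
  rewrite scale_kQE rho_branch (bigD1 l) //= big1 ?addr0 => [|l' /negbTE ne].
    by rewrite eqxx mulr1.
  by rewrite ne mulr0 mul0r.
exists (fun _ => 0) => j hj; rewrite big1 ?scale_kQE => [|l' _]; last by rewrite mul0r.
by rewrite gen_rho_nontrivial // ffunE mulr0.
Qed.

End Ideal.

Section Relations.
Variables (k : fieldType) (n : nat) (len : 'I_n -> nat).
Variables (mono : {set Seg len}) (p : nat) (B : 'M[k]_(p, n)) (piv : 'I_p -> 'I_n).
Hypothesis hadm : admissible mono B.
Hypothesis hrref : is_rref B piv.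
Hypothesis hrho : forall l j, B l j != 0 -> ~~ hasMono mono j.
Implicit Types (h : kQ k len).

Lemma mono_valid m : m \in mono -> valid m /\ (1 < len (tag m))%N.
Proof.
move=> hm; have := hadm (inI_mono B hm) (s := m).
rewrite pvE eqxx oner_eq0 /slen /valid => /(_ isT) h2.
split; first by rewrite -subn_gt0 (leq_trans _ h2).
exact: leq_trans (leq_trans h2 (leq_subr _ _)) (seg_b_le m).
Qed.

Lemma len_hasMono j : hasMono mono j -> (1 < len j)%N.
Proof. by case/existsP => m /andP[/mono_valid[_ ?] /eqP <-]. Qed.

Lemma len_B l j : B l j != 0 -> (1 < len j)%N.
Proof.
move=> nz; have := hadm (inI_rho mono B l) (s := branch len j).
by rewrite rho_branch /slen seg_a_branch seg_b_branch subn0 => /(_ nz).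
Qed.

Lemma inI_scale_arrowseg c (g : Arrow len) : inI mono B (c *: pv k (arrowseg g)) -> c = 0.
Proof.
move=> /hadm /(_ (arrowseg g)); rewrite scale_kQE pvE eqxx mulr1 slen_arrowseg.
by case: eqP => // _ /(_ isT).
Qed.

Lemma inI_branch_hasMono j : hasMono mono j -> inI mono B (pv k (branch len j)).
Proof.
case/existsP => m /andP[hm /eqP tm]; have [vm _] := mono_valid hm.
have bl := seg_b_le m; rewrite tm in bl.
have := @inI_gen _ _ _ mono _ B
  (if (0 < seg_a m)%N then Some (mkseg len j 0 (seg_a m)) else None, inl m,
   if (seg_b m < len j)%N then Some (mkseg len j (seg_b m) (len j)) else None) hm.
rewrite /gen /= -[m in pv k m]mksegE tm rmulo_mkseg ?vm ?bl ?leqnn //.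
by rewrite lmulo_mkseg ?(leq_trans vm bl) ?leqnn.
Qed.

Lemma B_piv l' l : B l' (piv l) = (l' == l)%:R.
Proof. by case: hrref => _ h1 _ h4; have [->|/h4] := eqVneq l' l. Qed.

Lemma sum_B_piv (d : 'I_p -> k) l : \sum_l' d l' * B l' (piv l) = d l.
Proof.
rewrite (bigD1 l) //= B_piv eqxx mulr1 big1 ?addr0 // => l' /negbTE nl.
by rewrite B_piv nl mulr0.
Qed.

Lemma piv_noMono l : ~~ hasMono mono (piv l).
Proof. by apply: (hrho (l := l)); rewrite B_piv eqxx oner_eq0. Qed.

(* By the echelon form, the coefficients d of [inI_branch_rowspan] are read off
   at the pivot branches. *)
Lemma inI_branch_row h j : inI mono B h -> ~~ hasMono mono j ->
  h (branch len j) = \sum_l h (branch len (piv l)) * B l j.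
Proof.
move=> hI nm; have [d hd] := inI_branch_rowspan hI.
by rewrite hd //; apply: eq_bigr => l _; rewrite hd ?piv_noMono // sum_B_piv.
Qed.

Lemma inI_branches h : (forall s, h s != 0 -> s = branch len (tag s)) ->
  (forall j, ~~ hasMono mono j -> h (branch len j) = \sum_l h (branch len (piv l)) * B l j) ->
  inI mono B h.
Proof.
move=> hsupp hrow.
suff -> : h = \sum_l h (branch len (piv l)) *: rho len B l
            + \sum_j ((hasMono mono j)%:R * h (branch len j)) *: pv k (branch len j).
  apply: inID; apply: inI_sum => j _; first exact/inIZ/inI_rho.
  have [hm|_] := boolP (hasMono mono j); last by rewrite mul0r scale0r; exact: inI0.
  exact/inIZ/inI_branch_hasMono.
apply/ffunP => s; rewrite ffunE sum_ffunE sum_branchesE.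
under eq_bigr => l _ do rewrite scale_kQE /rho sum_branchesE.
have [es|ns] := eqVneq s (branch len (tag s)); last first.
  have -> : h s = 0 by apply/eqP; apply: contraR ns => /hsupp/eqP.
  by rewrite addr0 big1 // => l _; rewrite mulr0.
have [hm|nm] := boolP (hasMono mono (tag s)); last first.
  by rewrite mul0r addr0 {1}es hrow //; apply: eq_bigr => l _; rewrite mulr1.
rewrite mul1r big1 ?add0r -?es // => l _.
have -> : B l (tag s) = 0 by apply/eqP; apply: contraTT hm => /hrho.
by rewrite mulr0.
Qed.

End Relations.

Section Cochains.
Variables (k : fieldType) (n : nat) (len : 'I_n -> nat).
Hypothesis len_gt0 : forall i, (0 < len i)%N.
Variables (mono : {set Seg len}) (p : nat) (B : 'M[k]_(p, n)) (piv : 'I_p -> 'I_n).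
Hypothesis hadm : admissible mono B.
Hypothesis hrref : is_rref B piv.
Hypothesis hrho : forall l j, B l j != 0 -> ~~ hasMono mono j.
Implicit Types (f : Arrow len -> kQ k len) (a : Arrow len).

Definition arrow_coef f a : k := f a (arrowseg a).

Definition branch_sum f (j : 'I_n) : k :=
  \sum_(t : 'I_(len j)) arrow_coef f (Tagged (arrT len) t).

Lemma cochain_arrow f a : is_cochain f -> (1 < len (tag a))%N ->
  f a = arrow_coef f a *: pv k (arrowseg a).
Proof.
move=> hf la; apply/ffunP => s; rewrite scale_kQE pvE.
have [->|ns] := eqVneq s (arrowseg a); first by rewrite mulr1.
rewrite mulr0; apply/eqP; apply: contraR ns => /hf[vs hs ht].
exact/eqP/(parallel_arrowseg len_gt0).
Qed.

Lemma cochain_Z_supp f a s : is_cochain f -> len (tag a) = 1%N ->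
  f a s != 0 -> s = branch len (tag s).
Proof. by move=> hf la /hf[_]; exact: parallel_Z. Qed.

Lemma diag_cochain f : (forall a, exists c, f a = c *: pv k (arrowseg a)) -> is_cochain f.
Proof.
move=> h a s; have [c ->] := h a; rewrite scale_kQE pvE.
by have [->|_] := eqVneq s (arrowseg a); rewrite ?mulr0 ?eqxx // valid_arrowseg.
Qed.

Lemma dpath_cochain f s : is_cochain f -> valid s -> (1 < len (tag s))%N ->
  dpath f s = (\sum_(t : 'I_(len (tag s)) | (seg_a s <= t < seg_b s)%N)
                 arrow_coef f (Tagged (arrT len) t)) *: pv k s.
Proof.
move=> hf vs ls; rewrite /dpath scaler_suml; apply: eq_bigr => t /andP[ta tb].
rewrite cochain_arrow // rmuloZ lmuloZ arrowseg_Tagged; congr (_ *: _).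
have bl := seg_b_le s.
have h1 : (t.+1 <= seg_b s <= len (tag s))%N by rewrite tb bl.
have h2 : (t < seg_b s <= len (tag s))%N by rewrite tb bl.
by rewrite (rmulo_mkseg _ (ltnSn t) h1) (lmulo_mkseg _ ta h2) mksegE.
Qed.

Lemma inI_D1_mono f m : is_cochain f -> m \in mono -> inI mono B (D1 B f (inl m)).
Proof.
move=> hf hm; have [vm lm] := mono_valid hadm hm.
by rewrite /D1 dpath_cochain //; apply/inIZ/inI_mono.
Qed.

Lemma D1_rho f l : is_cochain f ->
  D1 B f (inr l) = \sum_j (B l j * branch_sum f j) *: pv k (branch len j).
Proof.
move=> hf; apply: eq_bigr => j _.
have [->|nz] := eqVneq (B l j) 0; first by rewrite mul0r !scale0r.
rewrite dpath_cochain ?valid_branch ?(len_B hadm nz) // scalerA; congr (_ * _ *: _).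
by apply: eq_bigl => t; rewrite seg_a_branch seg_b_branch ltn_ord.
Qed.

Lemma inKerD1_row_const f : is_cochain f ->
  (forall l j j', B l j != 0 -> B l j' != 0 -> branch_sum f j = branch_sum f j') ->
  inKerD1 mono B f.
Proof.
move=> hf hconst; split=> // -[m|l] hm; first exact: inI_D1_mono.
suff -> : D1 B f (inr l) = branch_sum f (piv l) *: rho len B l by apply/inIZ/inI_rho.
rewrite D1_rho // /rho scaler_sumr; apply: eq_bigr => j _.
have [->|nz] := eqVneq (B l j) 0; first by rewrite mul0r !scale0r scaler0.
by rewrite scalerA mulrC (hconst l j (piv l)) // B_piv // eqxx oner_eq0.
Qed.

Lemma branch_sum_row f l j : inKerD1 mono B f -> B l j != 0 ->
  branch_sum f j = branch_sum f (piv l).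
Proof.
move=> [hf hk] nz; have := inI_branch_row hrref hrho (hk (inr l) isT) (hrho nz).
rewrite D1_rho // !sum_branches_branch.
under eq_bigr => l' _ do rewrite sum_branches_branch B_piv //.
rewrite (bigD1 l) //= eqxx mul1r big1 ?addr0 => [|l' /negbTE nl]; last first.
  by rewrite eq_sym nl !mul0r.
by rewrite mulrC => /(mulIf nz).
Qed.

End Cochains.

Section Components.
Variables (k : fieldType) (n : nat) (len : 'I_n -> nat).
Variables (mono : {set Seg len}) (p : nat) (B : 'M[k]_(p, n)).
Hypothesis hadm : admissible mono B.
Hypothesis hrho : forall l j, B l j != 0 -> ~~ hasMono mono j.

Lemma qedge_sym : symmetric (qedge mono B).
Proof.
move=> i j; rewrite /qedge andbA [qv mono i && _]andbC -andbA; congr [&& _, _ & _].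
by apply: eq_existsb => l; rewrite andbC.
Qed.

Let qedge_csym : connect_sym (qedge mono B) := sym_connect_sym qedge_sym.

Lemma qv_B l j : B l j != 0 -> qv mono j.
Proof. by move=> nz; rewrite /qv (len_B hadm nz) (hrho nz). Qed.

Lemma qedge_B l i j : B l i != 0 -> B l j != 0 -> qedge mono B i j.
Proof.
move=> nzi nzj; rewrite /qedge (qv_B nzi) (qv_B nzj).
by apply/existsP; exists l; rewrite nzi nzj.
Qed.

Lemma comp_of_qv i : qv mono i -> let K := [set j | connect (qedge mono B) i j] in
  K \in comps mono B /\ i \in K.
Proof. by move=> qi; rewrite /= inE connect0; split=> //; apply/imsetP; exists i; rewrite ?inE. Qed.

Lemma comps_neq0 K : K \in comps mono B -> exists i, i \in K.
Proof. by case/imsetP => i _ ->; exists i; rewrite inE connect0. Qed.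

Lemma compsE K i : K \in comps mono B -> i \in K -> K =i connect (qedge mono B) i.
Proof.
by case/imsetP => i0 _ -> /[!inE] ci j; rewrite !inE; exact: (same_connect qedge_csym ci j).
Qed.

Lemma comps_eq K K' i : K \in comps mono B -> K' \in comps mono B ->
  i \in K -> i \in K' -> K = K'.
Proof. by move=> hK hK' iK iK'; apply/setP => j; rewrite (compsE hK iK) (compsE hK' iK'). Qed.

Lemma comps_qedge K i j : K \in comps mono B -> qedge mono B i j -> (i \in K) = (j \in K).
Proof.
case/imsetP => i0 _ ->; rewrite !inE => /connect1 cij.
exact: (same_connect_r qedge_csym cij i0).
Qed.

Lemma comps_qv K j : K \in comps mono B -> j \in K -> qv mono j.
Proof.
case/imsetP => i; rewrite !inE => qi -> /[!inE]; rewrite qedge_csym.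
by case/connectP => -[|y q] /= hp eij; [rewrite -eij | case/andP: hp => /and3P[]].
Qed.

End Components.

Section Basis.
Variables (k : fieldType) (n : nat) (len : 'I_n -> nat).
Hypothesis len_gt0 : forall i, (0 < len i)%N.
Variables (mono : {set Seg len}) (p : nat) (B : 'M[k]_(p, n)) (piv : 'I_p -> 'I_n).
Hypothesis hadm : admissible mono B.
Hypothesis hrref : is_rref B piv.
Hypothesis hrho : forall l j, B l j != 0 -> ~~ hasMono mono j.
Implicit Types (f : Arrow len -> kQ k len) (g : Arrow len) (c : UIdx mono B piv -> k).

Local Notation C1 x := (inl (inl (inl x)) : UIdx mono B piv).
Local Notation C2 x := (inl (inl (inr x)) : UIdx mono B piv).
Local Notation C3 x := (inl (inr x) : UIdx mono B piv).
Local Notation C4 K := (inr K : UIdx mono B piv).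

Lemma big_UIdx (V : nmodType) (F : UIdx mono B piv -> V) :
  \sum_u F u = \sum_x F (C1 x) + \sum_x F (C2 x) + \sum_x F (C3 x) + \sum_K F (C4 K).
Proof. by rewrite !big_sumType. Qed.

Lemma C3P (x : C3idx mono) :
  [/\ val (tagged (val x)) != 0%N, (1 < len (tag (val x)))%N & ~~ hasMono mono (tag (val x))].
Proof. exact/and3P/(valP x). Qed.

Lemma len_C1 (x : C1idx mono) : (1 < len (tag (val x)))%N.
Proof. exact/(len_hasMono hadm)/(valP x). Qed.

Lemma len_C2 (x : C2idx mono piv) : len (tag (val x.1)) = 1%N.
Proof. exact/eqP/(valP x.1). Qed.

Lemma sum_delta_sub (T : finType) (P : pred T) (F : {x | P x} -> k) (x : {x | P x}) :
  \sum_(y : {x | P x}) F y * (val x == val y)%:R = F x.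
Proof.
rewrite (bigD1 x) //= eqxx mulr1 big1 ?addr0 // => y /negbTE ny.
by rewrite (inj_eq val_inj) eq_sym ny mulr0.
Qed.

Lemma sum_Tagged_eq g j :
  \sum_(t : 'I_(len j)) (Tagged (arrT len) t == g)%:R = (j == tag g)%:R :> k.
Proof.
case: g => i t0 /=; have [eji|nji] := eqVneq j i.
  subst j; rewrite (bigD1 t0) //= eqxx big1 ?addr0 // => t nt.
  by rewrite eq_Tagged /= (negbTE nt).
by rewrite big1 // => t _; case: eqP => // /(congr1 tag) /= eji; rewrite eji eqxx in nji.
Qed.

Lemma sum_Tagged_first (b : bool) j :
  \sum_(t : 'I_(len j)) (b && (val t == 0%N))%:R = b%:R :> k.
Proof.
case: b; last by rewrite big1.
rewrite (bigD1 (Ordinal (len_gt0 j))) //= big1 ?addr0 // => t nt.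
by case: eqP => // t0; case/eqP: nt; apply: val_inj.
Qed.

Lemma arrow_coef_arrcoch a g : arrow_coef (arrcoch a (pv k (arrowseg a))) g = (g == a)%:R.
Proof. by rewrite /arrow_coef /arrcoch; case: eqP => [->|_]; rewrite ?pvE ?eqxx ?ffunE. Qed.

Lemma arrow_coef_firstarr (K : pred 'I_n) g :
  arrow_coef (firstarr k K) g = ((tag g \in K) && (val (tagged g) == 0%N))%:R.
Proof. by rewrite /arrow_coef /firstarr; case: ifP; rewrite ?pvE ?eqxx ?ffunE. Qed.

Lemma arrow_coef_U1 x g : arrow_coef (U (C1 x)) g = (g == val x)%:R.
Proof. exact: arrow_coef_arrcoch. Qed.

Lemma arrow_coef_U2 x g : (1 < len (tag g))%N -> arrow_coef (U (C2 x)) g = 0.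
Proof.
move=> lg; rewrite /arrow_coef /= /arrcoch; case: eqP => [eg|_]; last by rewrite ffunE.
by move: lg; rewrite eg len_C2.
Qed.

Lemma arrow_coef_U3 x g : arrow_coef (U (C3 x)) g =
  (g == val x)%:R - ((tag g == tag (val x)) && (val (tagged g) == 0%N))%:R.
Proof.
rewrite /arrow_coef /= sub_kQE; congr (_ - _); first exact: arrow_coef_arrcoch.
by have := arrow_coef_firstarr (pred1 (tag (val x))) g; rewrite inE.
Qed.

Lemma arrow_coef_U4 K g :
  arrow_coef (U (C4 K)) g = ((tag g \in val K) && (val (tagged g) == 0%N))%:R.
Proof. exact: arrow_coef_firstarr. Qed.

Lemma branch_sum_U1 x j : branch_sum (U (C1 x)) j = (j == tag (val x))%:R.
Proof. by rewrite -sum_Tagged_eq; apply: eq_bigr => t _; apply: arrow_coef_arrcoch. Qed.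

Lemma branch_sum_U2 x j : (1 < len j)%N -> branch_sum (U (C2 x)) j = 0.
Proof. by move=> lj; apply: big1 => t _; apply: arrow_coef_U2. Qed.

Lemma branch_sum_U3 x j : branch_sum (U (C3 x)) j = 0.
Proof.
rewrite /branch_sum; under eq_bigr => t _ do rewrite arrow_coef_U3.
by rewrite sumrB sum_Tagged_eq sum_Tagged_first subrr.
Qed.

Lemma branch_sum_U4 K j : branch_sum (U (C4 K)) j = (j \in val K)%:R.
Proof.
rewrite /branch_sum -(sum_Tagged_first _ j); apply: eq_bigr => t _.
exact: arrow_coef_firstarr.
Qed.

Lemma U_cochain (u : UIdx mono B piv) : is_cochain (U u).
Proof.
case: u => [[[x|x]|x]|K].
- apply: diag_cochain => g; exists (g == val x)%:R.
  by rewrite /= /arrcoch; case: eqVneq => [->|_]; rewrite ?scale1r ?scale0r.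
- move=> g s; rewrite /= /arrcoch; have [->|_] := eqVneq g (val x.1); last by rewrite ffunE eqxx.
  rewrite pvE; have [-> _|_] := eqVneq s (branch len (val x.2)); last by rewrite eqxx.
  rewrite /src /tgt seg_a_arrowseg seg_b_arrowseg Z_arrow0 ?len_C2 //.
  split; first exact: valid_branch.
    by rewrite (seg_a_branch len).
  by rewrite (seg_b_branch len) vert_len // /vert len_C2.
- apply: diag_cochain => g.
  exists ((g == val x)%:R - ((tag g == tag (val x)) && (val (tagged g) == 0%N))%:R).
  rewrite /= /arrcoch /firstarr inE scalerBl; congr (_ - _).
    by case: eqVneq => [->|_]; rewrite ?scale1r ?scale0r.
  by case: ifP; rewrite ?scale1r ?scale0r.
- apply: diag_cochain => g; exists ((tag g \in val K) && (val (tagged g) == 0%N))%:R.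
  by rewrite /= /firstarr; case: ifP; rewrite ?scale1r ?scale0r.
Qed.

Lemma U_ker (u : UIdx mono B piv) : inKerD1 mono B (U u).
Proof.
apply: (inKerD1_row_const len_gt0 hadm hrref (@U_cochain u)) => l j j' nz nz'.
case: u => [[[x|x]|x]|K].
- have off j0 : B l j0 != 0 -> (j0 == tag (val x)) = false.
    by move=> /hrho nm; apply: contraNF nm => /eqP->; exact: (valP x).
  by rewrite !branch_sum_U1 !off.
- by rewrite !branch_sum_U2 ?(len_B hadm nz) ?(len_B hadm nz').
- by rewrite !branch_sum_U3.
- by rewrite !branch_sum_U4 (comps_qedge (valP K) (qedge_B hadm hrho nz nz')).
Qed.

Definition Ucomb c g : kQ k len := \sum_u c u *: U u g.
Definition Ucoef c g : k := \sum_u c u * arrow_coef (U u) g.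

Lemma cochain_Ucomb c : is_cochain (Ucomb c).
Proof.
move=> g s; rewrite /Ucomb sum_ffunE => nz.
have [u] : exists u, (c u *: U u g) s != 0.
  apply/existsP; apply: contraNT nz => /existsPn none.
  by apply/eqP/big1 => u _; apply/eqP/negPn/none.
by rewrite scale_kQE mulf_eq0 negb_or => /andP[_ /(@U_cochain u)].
Qed.

Lemma Ucomb_arrow c g : (1 < len (tag g))%N -> Ucomb c g = Ucoef c g *: pv k (arrowseg g).
Proof.
move=> lg; rewrite (cochain_arrow len_gt0 (@cochain_Ucomb c)) //; congr (_ *: _).
by rewrite /arrow_coef /Ucomb sum_ffunE; apply: eq_bigr => u _; rewrite scale_kQE.
Qed.

Lemma Ucoef_C1 c x : Ucoef c (val x) = c (C1 x).
Proof.
have mx : hasMono mono (tag (val x)) := valP x.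
rewrite /Ucoef big_UIdx [X in _ + X + _ + _]big1 ?addr0 => [|y _]; last first.
  by rewrite arrow_coef_U2 ?len_C1 ?mulr0.
rewrite [X in _ + X + _]big1 ?addr0 => [|y _]; last first.
  have [_ _ ny] := C3P y; rewrite arrow_coef_U3.
  have ne : tag (val x) != tag (val y) by apply: contraNneq ny => <-.
  by rewrite (negbTE ne) tag_neq_arrow // subrr mulr0.
rewrite [X in _ + X]big1 ?addr0 => [|K _]; last first.
  have /negbTE nK : tag (val x) \notin val K.
    by apply: contraL mx => /(comps_qv (valP K))/andP[].
  by rewrite arrow_coef_U4 nK mulr0.
by under eq_bigr => y _ do rewrite arrow_coef_U1; exact: sum_delta_sub.
Qed.

Lemma Ucoef_C3 c x : Ucoef c (val x) = c (C3 x).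
Proof.
have [nx0 lx nmx] := C3P x.
rewrite /Ucoef big_UIdx big1 ?add0r => [|y _]; last first.
  have ne : tag (val x) != tag (val y) by apply: contraNneq nmx => ->; exact: (valP y).
  by rewrite arrow_coef_U1 tag_neq_arrow // mulr0.
rewrite big1 ?add0r => [|y _]; last by rewrite arrow_coef_U2 // mulr0.
rewrite [X in _ + X]big1 ?addr0 => [|K _]; last first.
  by rewrite arrow_coef_U4 (negbTE nx0) andbF mulr0.
under eq_bigr => y _ do rewrite arrow_coef_U3 (negbTE nx0) andbF subr0.
exact: sum_delta_sub.
Qed.

Lemma Ucoef_first c (K : C4idx mono B) i (t : 'I_(len i)) :
  i \in val K -> val t = 0%N ->
  Ucoef c (Tagged (arrT len) t) = c (C4 K) - \sum_(x : C3idx mono | tag (val x) == i) c (C3 x).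
Proof.
move=> iK t0; have /andP[li nmi] := comps_qv (valP K) iK.
rewrite /Ucoef big_UIdx big1 ?add0r => [|y _]; last first.
  have ne : i != tag (val y) by apply: contraNneq nmi => ->; exact: (valP y).
  by rewrite arrow_coef_U1 tag_neq_arrow // mulr0.
rewrite big1 ?add0r => [|y _]; last by rewrite arrow_coef_U2 // mulr0.
rewrite addrC (bigD1 K) //= arrow_coef_U4 iK t0 /= mulr1 big1 ?addr0 => [|K' nK']; last first.
  rewrite arrow_coef_U4 /= t0 andbT; have [iK'|_] := boolP (i \in val K'); last by rewrite mulr0.
  by case/eqP: nK'; apply/val_inj/(comps_eq (valP K') (valP K) iK' iK).
rewrite -sumrN [in RHS]big_mkcond; congr (_ + _); apply: eq_bigr => y _ /=.
have [y0 _ _] := C3P y.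
have ne : (Tagged (arrT len) t == val y) = false by apply: contraNF y0 => /eqP <-; rewrite t0.
rewrite arrow_coef_U3 ne t0 eqxx andbT sub0r mulrN eq_sym.
by case: eqP; rewrite ?mulr1 ?mulr0 ?oppr0.
Qed.

Lemma C2_noMono (x : C2idx mono piv) : ~~ hasMono mono (val x.2).
Proof. by case/andP: (valP x.2). Qed.

Lemma piv_notB0w l : ~~ inB0w mono piv (piv l).
Proof. by rewrite /inB0w negb_and; apply/orP; right; apply/forallPn; exists l; rewrite eqxx. Qed.

Lemma Z_tag_neq g j : inZ g -> (1 < len j)%N -> (tag g == j) = false.
Proof. by move=> /eqP lg lj; apply: contraTF lj => /eqP <-; rewrite lg. Qed.

Lemma Ucomb_Z c g : inZ g ->
  Ucomb c g = \sum_(x : C2idx mono piv | val x.1 == g) c (C2 x) *: pv k (branch len (val x.2)).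
Proof.
move=> zg; rewrite /Ucomb big_UIdx big1 ?add0r => [|y _]; last first.
  by rewrite /= /arrcoch tag_neq_arrow ?Z_tag_neq ?len_C1 ?scaler0.
rewrite [X in _ + X + _]big1 ?addr0 => [|y _]; last first.
  have [_ ly _] := C3P y.
  by rewrite /= /arrcoch /firstarr inE tag_neq_arrow ?Z_tag_neq // subrr scaler0.
rewrite [X in _ + X]big1 ?addr0 => [|K _]; last first.
  rewrite /= /firstarr; case: ifP => [/andP[gK _]|_]; last by rewrite scaler0.
  by have /andP[lg _] := comps_qv (valP K) gK; rewrite (eqP zg) in lg.
rewrite [in RHS]big_mkcond; apply: eq_bigr => y _; rewrite /= /arrcoch eq_sym.
by case: eqP; rewrite ?scaler0.
Qed.

Lemma Ucomb_Z_branch c (x : C2idx mono piv) :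
  Ucomb c (val x.1) (branch len (val x.2)) = c (C2 x).
Proof.
rewrite (Ucomb_Z _ (valP x.1)) sum_pvE (bigD1 x) //= eqxx mulr1.
rewrite big1 ?addr0 // => y /andP[/eqP e1 ny].
rewrite (inj_eq (@branch_inj _ _)); case: eqP => [e2|_]; last by rewrite mulr0.
by case/eqP: ny; case: x y e1 e2 => [? ?] [? ?] /= /val_inj-> /val_inj->.
Qed.

Lemma Ucomb_Z_notB0w c g j : inZ g -> ~~ inB0w mono piv j -> Ucomb c g (branch len j) = 0.
Proof.
move=> zg nj; rewrite (Ucomb_Z _ zg) sum_pvE big1 // => y _.
rewrite (inj_eq (@branch_inj _ _)); case: eqP => [ej|_]; last by rewrite mulr0.
by move: nj; rewrite ej (valP y.2).
Qed.

Lemma Ucomb_free c : (forall g, inI mono B (Ucomb c g)) -> forall u, c u = 0.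
Proof.
move=> hc.
have coef0 g : (1 < len (tag g))%N -> Ucoef c g = 0.
  by move=> lg; move: (hc g); rewrite Ucomb_arrow // => /(inI_scale_arrowseg hadm).
have c3 x : c (C3 x) = 0 by rewrite -Ucoef_C3 coef0 //; have [] := C3P x.
case=> [[[x|x]|x]|K] //.
- by rewrite -Ucoef_C1 coef0 ?len_C1.
- rewrite -Ucomb_Z_branch (inI_branch_row hrref hrho (hc _) (C2_noMono x)).
  by rewrite big1 // => l _; rewrite (Ucomb_Z_notB0w _ (valP x.1) (piv_notB0w l)) mul0r.
- have [i iK] := comps_neq0 (valP K).
  have /andP[li _] := comps_qv (valP K) iK.
  have := coef0 (Tagged (arrT len) (Ordinal (len_gt0 i))) li.
  by rewrite (Ucoef_first c iK) // big1 ?subr0 // => x _; exact: c3.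
Qed.

Lemma connect_branch_sum f i j : inKerD1 mono B f ->
  connect (qedge mono B) i j -> branch_sum f i = branch_sum f j.
Proof.
move=> hf; have row := branch_sum_row len_gt0 hadm hrref hrho hf.
have edge x y : qedge mono B x y -> branch_sum f x = branch_sum f y.
  by case/and3P => _ _ /existsP[l /andP[/row-> /row->]].
case/connectP => q; elim: q i => [|y q IH] i /=; first by move=> _ ->.
by case/andP => /edge -> /IH.
Qed.

(* On C_2, subtracting the pivot-branch components reduces f g modulo the ρ_l
   to the non-pivot branches; on C_4, σ_f is constant on K (span_coef_C4). *)
Definition span_coef f (u : UIdx mono B piv) : k :=
  match u with
  | inl (inl (inl x)) => arrow_coef f (val x)
  | inl (inl (inr x)) => f (val x.1) (branch len (val x.2))
      - \sum_l f (val x.1) (branch len (piv l)) * B l (val x.2)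
  | inl (inr x) => arrow_coef f (val x)
  | inr K => if [pick i in val K] is Some i then branch_sum f i else 0
  end.

Lemma span_coef_C4 f (K : C4idx mono B) i : inKerD1 mono B f -> i \in val K ->
  span_coef f (C4 K) = branch_sum f i.
Proof.
move=> hf iK /=; case: pickP => [j jK|none]; last by have := none i; rewrite iK.
by apply/esym/connect_branch_sum; last by have := compsE (valP K) iK j; rewrite jK inE.
Qed.

Lemma sum_C3_branch (F : Arrow len -> k) i : qv mono i ->
  \sum_(x : C3idx mono | tag (val x) == i) F (val x)
  = \sum_(t : 'I_(len i) | val t != 0%N) F (Tagged (arrT len) t).
Proof.
move=> /andP[li nmi].
rewrite -(big_sub_cond (fun a : Arrow len =>
  [&& val (tagged a) != 0%N, (1 < len (tag a))%N & ~~ hasMono mono (tag a)]) (fun a => tag a == i)).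
transitivity (\sum_(i' | i' == i) \sum_(t : 'I_(len i') | val t != 0%N) F (Tagged (arrT len) t));
  last exact: big_pred1_eq.
rewrite (sig_big_dep _ (fun i' (t : 'I_(len i')) => val t != 0%N)
                       (fun i' t => F (Tagged (arrT len) t))).
apply: eq_big => [[i' t]|[i' t] _] //=.
have [ei|_] := eqVneq i' i; last by rewrite !andbF.
by subst i'; rewrite unfold_in /= li nmi !andbT.
Qed.

Lemma Ucoef_span f g : inKerD1 mono B f -> (1 < len (tag g))%N ->
  Ucoef (span_coef f) g = arrow_coef f g.
Proof.
move=> hf lg.
have [mg|nmg] := boolP (hasMono mono (tag g)); first exact: (Ucoef_C1 _ (exist _ g mg)).
have [t0|nt0] := eqVneq (val (tagged g)) 0%N; last first.
  have hg : [&& val (tagged g) != 0%N, (1 < len (tag g))%N & ~~ hasMono mono (tag g)].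
    by rewrite nt0 lg nmg.
  exact: (Ucoef_C3 _ (exist _ g hg)).
have qg : qv mono (tag g) by rewrite /qv lg nmg.
have [hK iK] := comp_of_qv B qg.
case: g lg nmg t0 qg hK iK => i t /= _ _ t0 qi hK iK.
pose K : C4idx mono B := exist (fun K => K \in comps mono B) _ hK.
rewrite (Ucoef_first _ (K := K) iK t0) (span_coef_C4 (K := K) hf iK).
have -> : \sum_(x : C3idx mono | tag (val x) == i) span_coef f (C3 x)
        = \sum_(x : C3idx mono | tag (val x) == i) arrow_coef f (val x) by [].
rewrite sum_C3_branch // /branch_sum (bigD1 t) //=.
rewrite (eq_bigl (fun t' : 'I_(len i) => val t' != 0%N)) ?addrK // => t'.
by rewrite -t0 (inj_eq val_inj).
Qed.

Lemma span_Ucomb f g : inKerD1 mono B f -> inI mono B (f g - Ucomb (span_coef f) g).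
Proof.
move=> hf; have [lg|lg] := ltnP 1 (len (tag g)).
  rewrite Ucomb_arrow // {1}(cochain_arrow len_gt0 hf.1 lg) Ucoef_span // subrr.
  exact: inI0.
have zg : inZ g by rewrite /inZ eqn_leq lg len_gt0.
apply: (inI_branches (piv := piv) hadm hrho) => [s|j nj].
  rewrite sub_kQE; have [fz|nz] := eqVneq (f g s) 0.
    by rewrite fz sub0r oppr_eq0; apply: (cochain_Z_supp (@cochain_Ucomb _)) (eqP zg).
  by move=> _; exact: cochain_Z_supp hf.1 (eqP zg) nz.
under eq_bigr => l _ do rewrite sub_kQE (Ucomb_Z_notB0w _ zg (piv_notB0w l)) subr0.
rewrite sub_kQE; have [bj|nbj] := boolP (inB0w mono piv j).
  have := Ucomb_Z_branch (span_coef f) (exist _ g zg, exist _ j bj); rewrite /= => ->.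
  by rewrite opprB addrC subrK.
rewrite (Ucomb_Z_notB0w _ zg nbj) subr0.
have [l <-] : exists l, piv l = j.
  by move: nbj; rewrite /inB0w nj /= => /forallPn[l /negPn/eqP <-]; exists l.
by rewrite sum_B_piv.
Qed.

End Basis.

Theorem lemma3p3
  (k : fieldType) (hchar : [pchar k] =i pred0)
  (n : nat) (len : 'I_n -> nat) (hn : (0 < n)%N) (hlen : forall i, (0 < len i)%N)
  (mono : {set Seg len}) (p : nat) (B : 'M[k]_(p, n)) (piv : 'I_p -> 'I_n)
  (hrref : is_rref B piv)
  (hrho : forall (l : 'I_p) (j : 'I_n), B l j != 0 -> ~~ hasMono mono j)
  (hadm : admissible mono B)
  (hmin : minimal_gen mono B) :
  [/\ (* U is contained in ker D_1 *)
      forall u : UIdx mono B piv, inKerD1 mono B (U u),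
      (* U is linearly independent in Hom_{E^e}(kQ_1, A) *)
      forall c : UIdx mono B piv -> k,
        (forall g : Arrow len, inI mono B (\sum_(u : UIdx mono B piv) c u *: U u g)) ->
        forall u, c u = 0
    & (* U spans ker D_1 *)
      forall f : Arrow len -> kQ k len, inKerD1 mono B f ->
        exists c : UIdx mono B piv -> k,
          forall g : Arrow len,
            inI mono B (f g - \sum_(u : UIdx mono B piv) c u *: U u g)].
Proof.
split; first exact: (U_ker hlen hadm hrref hrho).
  exact: (Ucomb_free hlen hadm hrref hrho).
by move=> f hf; exists (span_coef f) => g; exact: (span_Ucomb hlen hadm hrref hrho g hf).
Qed.
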